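(* Let $g$ and $h$ be any two encoders (in the applications, $g=f_t$ is the current model and $h=f_{t-1}$ the previous one) and let $\mathcal{D}$ be any task distribution. Then $$L_{\mathrm{con}}(g;\mathcal{D}) \le \alpha\, L_{\mathrm{con}}(h;\mathcal{D}) + L_{\mathrm{dis}}(g;h,\mathcal{D}) + \beta,$$ $$L_{\mathrm{con}}(g;\mathcal{D}) \ge \alpha\, L_{\mathrm{con}}(h;\mathcal{D}) + L_{\mathrm{dis}}(g;h,\mathcal{D}) + \beta',$$ where $\alpha=\frac{2e^2}{1+e^2}$, $\beta = 2-\alpha+\alpha\log\frac{\alpha}{2}$ and $\beta'=-\alpha\log(1+e^2)-\alpha$.
   Context: Let $\mathcal X$ be a measurable input space and $d\ge 1$. An encoder is a measurable map $f:\mathcal X\to\mathbb R^d$ with $\|f(x)\|_2=1$ for all $x$. A task distribution $\mathcal D$ consists of a probability distribution $\mu$ on a countable set of classes together with, for each class $c$, a probability distribution $\mathcal D_c$ on $\mathcal X$. Sampling scheme: $c^+\sim\mu$ and $c^-\sim\mu$ independently; given $c^+$, $x,x^+$ are drawn i.i.d. from $\mathcal D_{c^+}$; given $c^-$, $x^-\sim\mathcal D_{c^-}$ independently. Let $\ell(v)=\log(1+e^{-v})$. The contrastive loss is $L_{\mathrm{con}}(f;\mathcal D)=\mathbb E\big[\ell\big(f(x)^\top(f(x^+)-f(x^-))\big)\big]$. For an encoder $f$ let $\mathbf p(f;x,x^+,x^-)=\mathrm{softmax}\big(f(x)^\top f(x^+),\,f(x)^\top f(x^-)\big)\in\mathbb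 R^2$. For encoders $g,h$ the distillation loss is $L_{\mathrm{dis}}(g;h,\mathcal D)=\mathbb E\big[-\mathbf p(h;x,x^+,x^-)\cdot\log\mathbf p(g;x,x^+,x^-)\big]$ (logarithm taken componentwise), with the same sampling scheme. *)

From HB Require Import structures.
From mathcomp Require Import all_boot all_order all_algebra.
From mathcomp Require Import all_classical all_reals all_analysis.
Set Implicit Arguments. Unset Strict Implicit. Unset Printing Implicit Defensive.
Import Order.TTheory GRing.Theory Num.Theory.
Local Open Scope ring_scope.
Local Open Scope classical_set_scope.

Section Defs.
Context {R : realType}.

Definition dotv (n : nat) (u v : 'rV[R]_n) : R := \sum_(i < n) u ord0 i * v ord0 i.

Definition is_encoder (dX : measure_display) (X : measurableType dX) (n : nat)
  (f : X -> 'rV[R]_n) : Prop :=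
  (forall i : 'I_n, measurable_fun setT (fun x => f x ord0 i)) /\
  (forall x, \sum_(i < n) (f x ord0 i) ^+ 2 = 1).

Definition is_pmf (C : countType) (mu : C -> R) : Prop :=
  (forall c, 0 <= mu c) /\ (\esum_(c in [set: C]) (mu c)%:E = 1%E).

Definition logistic (v : R) : R := ln (1 + expR (- v)).

Definition softmax1 (a b : R) : R := expR a / (expR a + expR b).
Definition softmax2 (a b : R) : R := expR b / (expR a + expR b).

(* expectation under the sampling scheme: c+ ~ mu, c- ~ mu independent,
   x, x+ iid ~ D_{c+}, x- ~ D_{c-} *)
Definition task_expect (dX : measure_display) (X : measurableType dX)
  (C : countType) (mu : C -> R) (D : C -> probability X R)
  (F : X -> X -> X -> R) : \bar R :=
  \esum_(cc in [set: C * C])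
    ((mu cc.1 * mu cc.2)%:E *
     \int[D cc.1]_x \int[D cc.1]_xp \int[D cc.2]_xn (F x xp xn)%:E)%E.

Definition L_con (dX : measure_display) (X : measurableType dX) (n : nat)
  (C : countType) (mu : C -> R) (D : C -> probability X R)
  (f : X -> 'rV[R]_n) : \bar R :=
  task_expect mu D (fun x xp xn => logistic (dotv (f x) (f xp - f xn))).

Definition L_dis (dX : measure_display) (X : measurableType dX) (n : nat)
  (C : countType) (mu : C -> R) (D : C -> probability X R)
  (g h : X -> 'rV[R]_n) : \bar R :=
  task_expect mu D (fun x xp xn =>
    let a := dotv (h x) (h xp) in let b := dotv (h x) (h xn) in
    let a' := dotv (g x) (g xp) in let b' := dotv (g x) (g xn) in
    - (softmax1 a b * ln (softmax1 a' b') + softmax2 a b * ln (softmax2 a' b'))).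

Definition alpha_c : R := 2 * expR 2 / (1 + expR 2).
Definition beta_c : R := 2 - alpha_c + alpha_c * ln (alpha_c / 2).
Definition beta'_c : R := - alpha_c * ln (1 + expR 2) - alpha_c.

End Defs.

From HB Require Import structures.
From mathcomp Require Import all_boot all_order all_algebra.
From mathcomp Require Import all_classical all_reals all_analysis.
From mathcomp Require Import measurable_realfun.
From mathcomp Require Import ring lra.
Import Order.TTheory GRing.Theory Num.Theory.
Local Open Scope ring_scope.
Local Open Scope classical_set_scope.

(* Write d = <g x, g x-> - <g x, g x+> and u for the same margin of h.  The
   contrastive integrand of g is softplus d, that of h is softplus u, and the
   softmax cross entropy of g against h is softplus d - sigmoid u * d.  Hence
   L_con(g) - L_dis(g; h) is the expectation of sigmoid u * d, and both bounds
   follow by integrating the elementary inequalities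
     alpha softplus u + beta' <= sigmoid u * d <= alpha softplus u + beta,
   valid for |u|, |d| <= 2 (unit-norm encoders); the constants come from the
   tangent-line bounds ln z <= z - 1 and 1 - 1/z <= ln z. *)

Section esum_weights.
Local Open Scope ereal_scope.

Lemma ge0_esumZl {R : realType} (T : choiceType) (S : set T) (a : T -> \bar R) (r : R) :
  (0 <= r)%R -> (forall i, 0 <= a i) ->
  \esum_(i in S) (r%:E * a i) = r%:E * \esum_(i in S) a i.
Proof.
move=> r0 a0; rewrite /esum -ereal_supZl //; last first.
  by apply/set0P; exists 0; exists set0; [exact: fsets_set0 | rewrite fsbig_set0].
congr ereal_sup; apply/seteqP; split => x /=.
  by move=> [A HA <-]; exists (\sum_(i \in A) a i); [exists A|rewrite ge0_mule_fsumr].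
by move=> [y [A HA <-] <-]; exists A => //; rewrite ge0_mule_fsumr.
Qed.

Lemma esum_pmf_prod {R : realType} (C : countType) (mu : C -> R) : is_pmf mu ->
  \esum_(cc in [set: (C * C)%type]) (mu cc.1 * mu cc.2)%:E = 1.
Proof.
move=> [mu0 mu1].
have -> : [set: (C * C)%type] = [set: C] `*`` (fun _ => [set: C]) by apply/seteqP.
rewrite -(@esum_esum R C C setT (fun _ => setT) (fun i j => (mu i * mu j)%:E)); last first.
  by move=> i j _ _; rewrite lee_fin mulr_ge0.
under eq_esum do under eq_esum do rewrite EFinM.
under eq_esum do rewrite ge0_esumZl // mu1 mule1.
exact: mu1.
Qed.

End esum_weights.

Section triple_integral.
Context {R : realType} {dX : measure_display} {X : measurableType dX}.
Implicit Types (P Q : probability X R) (F G H : X -> X -> X -> R).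

Definition measurable3 F :=
  measurable_fun [set: ((X * X) * X)%type] (fun p => F p.1.1 p.1.2 p.2).

Definition triple_integral P Q F :=
  (\int[P]_x \int[P]_xp \int[Q]_xn (F x xp xn)%:E)%E.

Lemma measurable3_affine F G (a c : R) : measurable3 F -> measurable3 G ->
  measurable3 (fun x y z => a * F x y z + G x y z + c).
Proof.
move=> mF mG; apply: measurable_funD => //.
by apply: measurable_funD => //; apply: measurable_funM.
Qed.

Lemma measurable3_section F x y : measurable3 F -> measurable_fun [set: X] (F x y).
Proof.
move=> mF.
exact: (measurableT_comp mF (@pair1_measurable _ _ (X * X)%type X (x, y))).
Qed.

Lemma measurable3_integral_inner Q F x : measurable3 F ->
  (forall x y z, 0 <= F x y z) ->
  measurable_fun [set: X] (fun y => \int[Q]_z (F x y z)%:E)%E.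
Proof.
move=> mF F0.
have mf : measurable_fun [set: (X * X)%type] (fun p => (F x p.1 p.2)%:E).
  apply/measurable_EFinP.
  apply: (measurableT_comp mF (f := fun p => F p.1.1 p.1.2 p.2)
    (g := fun p : (X * X)%type => ((x, p.1), p.2))).
  apply: measurable_fun_pair => //.
  exact: (measurableT_comp (pair1_measurable x) measurable_fst).
apply: (@measurable_fun_fubini_tonelli_F _ _ X X R Q _ mf) => p.
by rewrite lee_fin.
Qed.

Lemma measurable3_integral_outer P Q F : measurable3 F ->
  (forall x y z, 0 <= F x y z) ->
  measurable_fun [set: X] (fun x => \int[P]_y \int[Q]_z (F x y z)%:E)%E.
Proof.
move=> mF F0.
have mf : measurable_fun [set: ((X * X) * X)%type]
    (fun p => (F p.1.1 p.1.2 p.2)%:E) by exact/measurable_EFinP.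
have mQ : measurable_fun [set: (X * X)%type]
    (fun p => \int[Q]_z (F p.1 p.2 z)%:E)%E.
  by apply: (@measurable_fun_fubini_tonelli_F _ _ (X * X)%type X R Q _ mf) => p;
    rewrite lee_fin.
apply: (@measurable_fun_fubini_tonelli_F _ _ X X R P _ mQ) => p.
by apply: integral_ge0 => z _; rewrite lee_fin.
Qed.

Local Open Scope ereal_scope.

Lemma ge0_integral_affine P (f g : X -> \bar R) (a c : R) :
  (0 <= a)%R -> (0 <= c)%R ->
  measurable_fun [set: X] f -> measurable_fun [set: X] g ->
  (forall x, 0 <= f x) -> (forall x, 0 <= g x) ->
  \int[P]_x (a%:E * f x + g x + c%:E) = a%:E * \int[P]_x f x + \int[P]_x g x + c%:E.
Proof.
move=> a0 c0 mf mg f0 g0.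
have maf : measurable_fun [set: X] (fun x => a%:E * f x) by exact: measurable_funeM.
have af0 x : 0 <= a%:E * f x by rewrite mule_ge0 // lee_fin.
rewrite (@ge0_integralD _ _ _ P setT measurableT (fun x => a%:E * f x + g x) (fun=> c%:E));
  last 4 first.
- by move=> x _; rewrite adde_ge0.
- exact: emeasurable_funD.
- by move=> x _ /=; rewrite lee_fin.
- exact: measurable_cst.
rewrite (@ge0_integralD _ _ _ P setT measurableT (fun x => a%:E * f x) g) //.
rewrite ge0_integralZl // integral_cst //.
by have := probability_setT P => /= ->; rewrite mule1.
Qed.

Lemma triple_integral_ge0 P Q F : (forall x y z, 0 <= F x y z)%R ->
  0 <= triple_integral P Q F.
Proof.
by move=> F0; apply: integral_ge0 => x _; apply: integral_ge0 => y _;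
  apply: integral_ge0 => z _; rewrite lee_fin.
Qed.

Lemma triple_integral_affine P Q F G (a c : R) :
  (0 <= a)%R -> (0 <= c)%R -> measurable3 F -> measurable3 G ->
  (forall x y z, 0 <= F x y z)%R -> (forall x y z, 0 <= G x y z)%R ->
  triple_integral P Q (fun x y z => a * F x y z + G x y z + c)%R =
  a%:E * triple_integral P Q F + triple_integral P Q G + c%:E.
Proof.
move=> a0 c0 mF mG F0 G0; rewrite /triple_integral.
have ge0_integral2 K : (forall x y z, 0 <= K x y z)%R ->
    forall x, 0 <= \int[P]_y \int[Q]_z (K x y z)%:E.
  by move=> K0 x; apply: integral_ge0 => y _; apply: integral_ge0 => z _;
    rewrite lee_fin.
have inner x y : \int[Q]_z ((a * F x y z + G x y z + c)%R)%:E =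
    a%:E * \int[Q]_z (F x y z)%:E + \int[Q]_z (G x y z)%:E + c%:E.
  under eq_integral do rewrite !EFinD EFinM.
  by apply: ge0_integral_affine => // [||z|z];
    rewrite ?lee_fin //; apply/measurable_EFinP; exact: measurable3_section.
have middle x : \int[P]_y \int[Q]_z ((a * F x y z + G x y z + c)%R)%:E =
    a%:E * \int[P]_y \int[Q]_z (F x y z)%:E + \int[P]_y \int[Q]_z (G x y z)%:E + c%:E.
  under eq_integral do rewrite inner.
  by apply: ge0_integral_affine => // [||y|y];
    [exact: measurable3_integral_inner|exact: measurable3_integral_inner|
     apply: integral_ge0 => z _; rewrite lee_fin..].
under eq_integral do rewrite middle.
by apply: ge0_integral_affine => //;
  [exact: measurable3_integral_outer|exact: measurable3_integral_outer|
   exact: ge0_integral2..].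
Qed.

Lemma le_triple_integral P Q F G : measurable3 F -> measurable3 G ->
  (forall x y z, 0 <= F x y z)%R -> (forall x y z, F x y z <= G x y z)%R ->
  triple_integral P Q F <= triple_integral P Q G.
Proof.
move=> mF mG F0 FG.
have G0 x y z : (0 <= G x y z)%R by apply: le_trans (FG x y z).
apply: ge0_le_integral => //.
- by move=> x _; apply: integral_ge0 => y _; apply: integral_ge0 => z _; rewrite lee_fin.
- exact: measurable3_integral_outer.
- exact: measurable3_integral_outer.
move=> x _; apply: ge0_le_integral => //.
- by move=> y _; apply: integral_ge0 => z _; rewrite lee_fin.
- exact: measurable3_integral_inner.
- exact: measurable3_integral_inner.
move=> y _; apply: ge0_le_integral => //.
- by move=> z _; rewrite lee_fin.
- by apply/measurable_EFinP; exact: measurable3_section.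
- by apply/measurable_EFinP; exact: measurable3_section.
by move=> z _; rewrite lee_fin.
Qed.

End triple_integral.

Section task_expectation.
Context {R : realType} {dX : measure_display} {X : measurableType dX}.
Variables (C : countType) (mu : C -> R) (D : C -> probability X R).
Hypothesis mu_pmf : is_pmf mu.
Implicit Types (F G H : X -> X -> X -> R).
Local Open Scope ereal_scope.

Let weight_ge0 (cc : C * C) : (0 <= mu cc.1 * mu cc.2)%R.
Proof. by case: mu_pmf => mu0 _; rewrite mulr_ge0. Qed.

Let weighted_ge0 F : (forall x y z, 0 <= F x y z)%R -> forall cc : C * C,
  0 <= (mu cc.1 * mu cc.2)%:E * triple_integral (D cc.1) (D cc.2) F.
Proof.
by move=> F0 cc; apply: mule_ge0; [rewrite lee_fin|exact: triple_integral_ge0].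
Qed.

Let task_expectE F : task_expect mu D F = \esum_(cc in [set: (C * C)%type])
  ((mu cc.1 * mu cc.2)%:E * triple_integral (D cc.1) (D cc.2) F).
Proof. by []. Qed.

Lemma task_expect_affine F G (a c : R) :
  (0 <= a)%R -> (0 <= c)%R -> measurable3 F -> measurable3 G ->
  (forall x y z, 0 <= F x y z)%R -> (forall x y z, 0 <= G x y z)%R ->
  task_expect mu D (fun x y z => a * F x y z + G x y z + c)%R =
  a%:E * task_expect mu D F + task_expect mu D G + c%:E.
Proof.
move=> a0 c0 mF mG F0 G0; rewrite !task_expectE.
transitivity (\esum_(cc in [set: (C * C)%type])
   (a%:E * ((mu cc.1 * mu cc.2)%:E * triple_integral (D cc.1) (D cc.2) F) +
    (mu cc.1 * mu cc.2)%:E * triple_integral (D cc.1) (D cc.2) G +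
    c%:E * (mu cc.1 * mu cc.2)%:E)).
  apply: eq_esum => cc _.
  rewrite (triple_integral_affine _ _ _ _ _ _ a0 c0 mF mG F0 G0).
  have IG0 := triple_integral_ge0 (D cc.1) (D cc.2) _ G0.
  have aIF0 : 0 <= a%:E * triple_integral (D cc.1) (D cc.2) F.
    by apply: mule_ge0; [rewrite lee_fin|exact: triple_integral_ge0].
  rewrite ge0_muleDr; [|exact: adde_ge0|by rewrite lee_fin].
  rewrite ge0_muleDr; [|exact: aIF0|exact: IG0].
  by rewrite (muleC _ c%:E) muleA (muleC _ a%:E) -muleA.
rewrite esumD; last 2 first.
- move=> cc _; apply: adde_ge0; last exact: weighted_ge0.
  by apply: mule_ge0; [rewrite lee_fin|exact: weighted_ge0].
- by move=> cc _; apply: mule_ge0; rewrite lee_fin.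
rewrite esumD; last 2 first.
- by move=> cc _; apply: mule_ge0; [rewrite lee_fin|exact: weighted_ge0].
- by move=> cc _; exact: weighted_ge0.
rewrite ge0_esumZl //; last by move=> cc; exact: weighted_ge0.
rewrite ge0_esumZl //.
by rewrite esum_pmf_prod // mule1.
Qed.

Lemma le_task_expect F G : measurable3 F -> measurable3 G ->
  (forall x y z, 0 <= F x y z)%R -> (forall x y z, F x y z <= G x y z)%R ->
  task_expect mu D F <= task_expect mu D G.
Proof.
move=> mF mG F0 FG; rewrite !task_expectE; apply: le_esum => cc _.
by rewrite lee_wpmul2l; [|rewrite lee_fin|exact: le_triple_integral].
Qed.

Lemma le_task_expect_affine F1 G1 F2 G2 (a1 a2 b : R) :
  (0 <= a1)%R -> (0 <= a2)%R ->
  measurable3 F1 -> measurable3 G1 -> measurable3 F2 -> measurable3 G2 ->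
  (forall x y z, 0 <= F1 x y z)%R -> (forall x y z, 0 <= G1 x y z)%R ->
  (forall x y z, 0 <= F2 x y z)%R -> (forall x y z, 0 <= G2 x y z)%R ->
  (forall x y z, a1 * F1 x y z + G1 x y z + b <= a2 * F2 x y z + G2 x y z)%R ->
  a1%:E * task_expect mu D F1 + task_expect mu D G1 + b%:E <=
  a2%:E * task_expect mu D F2 + task_expect mu D G2.
Proof.
move=> a10 a20 mF1 mG1 mF2 mG2 F10 G10 F20 G20 le12.
(* The expectations may be [+oo], so [b] cannot simply be subtracted under the
   integrals: it is split into nonnegative parts kept on both sides. *)
pose bp : R := `|b|%R; pose bn : R := (`|b| - b)%R.
have bp0 : (0 <= bp)%R by exact: normr_ge0.
have bn0 : (0 <= bn)%R by rewrite subr_ge0 ler_norm.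
have bE : b = (bp - bn)%R by rewrite /bp /bn opprB addrC subrK.
have lhs_ge0 x y z : (0 <= a1 * F1 x y z + G1 x y z + bp)%R.
  by rewrite !addr_ge0 ?mulr_ge0.
have le_shifted x y z :
    (a1 * F1 x y z + G1 x y z + bp <= a2 * F2 x y z + G2 x y z + bn)%R.
  by have := le12 x y z; rewrite /bp /bn; lra.
have := le_task_expect _ _ (measurable3_affine _ _ a1 bp mF1 mG1)
  (measurable3_affine _ _ a2 bn mF2 mG2) lhs_ge0 le_shifted.
rewrite (task_expect_affine F1 G1 a1 bp a10 bp0 mF1 mG1 F10 G10).
rewrite (task_expect_affine F2 G2 a2 bn a20 bn0 mF2 mG2 F20 G20) => shifted.
by rewrite bE EFinB addeA leeBlDr; [exact: shifted|].
Qed.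

End task_expectation.

Arguments le_task_expect_affine {R dX X C mu} D mu_pmf {F1 G1 F2 G2 a1 a2 b}.

Section logistic_calculus.
Context {R : realType}.
Implicit Types (u v d z a b : R).

Definition softplus v := ln (1 + expR v).
Definition sigmoid v := expR v / (1 + expR v).

Lemma softplus_ge0 v : 0 <= softplus v.
Proof. by apply: ln_ge0; rewrite lerDl expR_ge0. Qed.

Lemma softplus_ge v : v <= softplus v.
Proof.
rewrite /softplus -{1}(expRK v) ler_ln ?posrE ?expR_gt0 //; lra.
Qed.

Lemma sigmoidE v : sigmoid v = expR (v - softplus v).
Proof. by rewrite /sigmoid /softplus expRB lnK // posrE. Qed.

Lemma measurable_softplus : measurable_fun [set: R] softplus.
Proof. by apply: measurableT_comp => //; apply: measurable_funD. Qed.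

Lemma measurable_sigmoid : measurable_fun [set: R] sigmoid.
Proof.
rewrite (_ : sigmoid = fun v => expR (v - softplus v)); last first.
  by apply/funext => v; rewrite sigmoidE.
apply: measurableT_comp => //; apply: measurable_funB => //.
exact: measurable_softplus.
Qed.

Lemma sigmoid_ge0 v : 0 <= sigmoid v.
Proof. by rewrite divr_ge0 // ltW ?expR_gt0. Qed.

Lemma sigmoid_le1 v : sigmoid v <= 1.
Proof. by rewrite ler_pdivrMr // mul1r; lra. Qed.

Lemma ln_sigmoid v : ln (sigmoid v) = v - softplus v.
Proof. by rewrite sigmoidE expRK. Qed.

Lemma ln_1subsigmoid v : ln (1 - sigmoid v) = - softplus v.
Proof.
have -> : 1 - sigmoid v = (1 + expR v)^-1.
  by rewrite /sigmoid; field; rewrite gt_eqF.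
by rewrite lnV // posrE.
Qed.

Lemma softmax2E a b : softmax2 a b = sigmoid (b - a).
Proof.
have ea0 := expR_gt0 a; have eb0 := expR_gt0 b.
rewrite /softmax2 /sigmoid expRB.
by field; rewrite ?gt_eqF ?addr_gt0 ?mulr_gt0 ?divr_gt0.
Qed.

Lemma softmax1E a b : softmax1 a b = 1 - softmax2 a b.
Proof.
have ea0 := expR_gt0 a; have eb0 := expR_gt0 b.
by rewrite /softmax1 /softmax2; field; rewrite gt_eqF ?addr_gt0.
Qed.

Lemma softmax_cross_entropy a b a' b' :
  - (softmax1 a b * ln (softmax1 a' b') + softmax2 a b * ln (softmax2 a' b')) =
  softplus (b' - a') - sigmoid (b - a) * (b' - a').
Proof. by rewrite !softmax1E !softmax2E ln_1subsigmoid ln_sigmoid; ring. Qed.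

Lemma sigmoid_mul_le_softplus u d : sigmoid u * d <= softplus d.
Proof.
have := sigmoid_ge0 u; have := sigmoid_le1 u.
have := softplus_ge0 d; have := softplus_ge d.
have [d0|d0] := leP 0 d; nra.
Qed.

Lemma ln_le_sub1 z : 0 < z -> ln z <= z - 1.
Proof.
by move=> z0; have := @le_ln1Dx _ (z - 1); rewrite (addrC 1) subrK; apply; lra.
Qed.

Lemma ln_ge_1subV z : 0 < z -> 1 - z^-1 <= ln z.
Proof.
move=> z0; have zV0 : 0 < z^-1 by rewrite invr_gt0.
by have := ln_le_sub1 _ zV0; rewrite lnV ?posrE //; lra.
Qed.

Lemma alpha_gt0 : 0 < alpha_c :> R.
Proof. by rewrite divr_gt0 ?mulr_gt0 ?addr_gt0 ?expR_gt0. Qed.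

Lemma sigmoid_mul_le u d : d <= 2 -> sigmoid u * d <= alpha_c * softplus u + beta_c.
Proof.
move=> d2; rewrite /beta_c /sigmoid /softplus.
set E := expR u; have E0 : 0 < E := expR_gt0 u.
have al0 := alpha_gt0; have y0 : 0 < 1 + E by rewrite addr_gt0.
have le_2sigmoid : E / (1 + E) * d <= 2 - 2 / (1 + E).
  have -> : 2 - 2 / (1 + E) = E / (1 + E) * 2 by field; rewrite gt_eqF.
  by rewrite ler_wpM2l // divr_ge0 // ltW.
have z0 : 0 < (1 + E) * (alpha_c / 2) by rewrite mulr_gt0 // divr_gt0.
have tangent : alpha_c - 2 / (1 + E) <= alpha_c * (ln (1 + E) + ln (alpha_c / 2)).
  have -> : alpha_c - 2 / (1 + E) = alpha_c * (1 - ((1 + E) * (alpha_c / 2))^-1).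
    by field; rewrite ?gt_eqF.
  by rewrite -lnM ?posrE ?divr_gt0 // ler_wpM2l ?ln_ge_1subV // ltW.
lra.
Qed.

Lemma sigmoid_mul_ge u d : u <= 2 -> -2 <= d ->
  alpha_c * softplus u + beta'_c <= sigmoid u * d.
Proof.
move=> u2 d2; rewrite /beta'_c /sigmoid /softplus.
set E := expR u; have E0 : 0 < E := expR_gt0 u.
have Ee : E <= expR 2 by rewrite /E ler_expR.
have e20 : 0 < expR 2 :> R := expR_gt0 2.
have al0 := alpha_gt0; have y0 : 0 < 1 + E by rewrite addr_gt0.
have y20 : 0 < 1 + expR 2 :> R by rewrite addr_gt0.
have ge_2sigmoid : - 2 + 2 / (1 + E) <= E / (1 + E) * d.
  have -> : - 2 + 2 / (1 + E) = E / (1 + E) * (- 2) by field; rewrite gt_eqF.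
  by rewrite ler_wpM2l // divr_ge0 // ltW.
have tangent : alpha_c * ln (1 + E) - alpha_c * ln (1 + expR 2) <=
               alpha_c * ((1 + E) / (1 + expR 2) - 1).
  by rewrite -mulrBr -ln_div ?posrE // ler_wpM2l ?ln_le_sub1 ?divr_gt0 // ltW.
have gap : 0 <= - 2 + 2 / (1 + E) - alpha_c * ((1 + E) / (1 + expR 2) - 1) + alpha_c.
  have -> : - 2 + 2 / (1 + E) - alpha_c * ((1 + E) / (1 + expR 2) - 1) + alpha_c =
      (expR 2 - E) * (2 * expR 2 * (1 + E) + 2 * (1 + expR 2)) /
      ((1 + E) * (1 + expR 2) ^+ 2).
    by rewrite /alpha_c; field; rewrite ?gt_eqF.
  apply: divr_ge0; last by rewrite ltW // mulr_gt0 // exprn_gt0.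
  by apply: mulr_ge0; [lra|rewrite ltW // addr_gt0 ?mulr_gt0].
lra.
Qed.

End logistic_calculus.

Section unit_vectors.
Context {R : realType} {n : nat}.
Implicit Types (u v w : 'rV[R]_n).

Lemma dotv_subr u v w : dotv u (v - w) = dotv u v - dotv u w.
Proof. by rewrite /dotv -sumrB; apply: eq_bigr => i _; rewrite !mxE mulrBr. Qed.

Lemma dotv_unit_bounds u v :
  \sum_(i < n) (u ord0 i) ^+ 2 = 1 -> \sum_(i < n) (v ord0 i) ^+ 2 = 1 ->
  -1 <= dotv u v <= 1.
Proof.
move=> u1 v1.
have sqr_sum_ge0 (s : R) : 0 <= \sum_(i < n) (u ord0 i + s * v ord0 i) ^+ 2.
  by apply: sumr_ge0 => i _; exact: sqr_ge0.
have expand (s : R) : \sum_(i < n) (u ord0 i + s * v ord0 i) ^+ 2 =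
    \sum_(i < n) (u ord0 i) ^+ 2 + s ^+ 2 * \sum_(i < n) (v ord0 i) ^+ 2 +
    2 * s * dotv u v.
  rewrite /dotv !mulr_sumr -!big_split /=.
  by apply: eq_bigr => i _; ring.
have := sqr_sum_ge0 1; have := sqr_sum_ge0 (-1); rewrite !expand u1 v1.
by move=> ? ?; apply/andP; split; lra.
Qed.

End unit_vectors.

Section encoder_losses.
Context {R : realType} {dX : measure_display} {X : measurableType dX} {n : nat}.
Variables (C : countType) (mu : C -> R) (D : C -> probability X R).
Implicit Types (f g h : X -> 'rV[R]_n).

Definition margin f x xp xn := dotv (f x) (f xn) - dotv (f x) (f xp).

Definition con_integrand f x xp xn := softplus (margin f x xp xn).

Definition dis_integrand g h x xp xn :=
  con_integrand g x xp xn - sigmoid (margin h x xp xn) * margin g x xp xn.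

Lemma margin_bounds {f} x xp xn : is_encoder f -> -2 <= margin f x xp xn <= 2.
Proof.
move=> [_ f1].
have /andP[? ?] := dotv_unit_bounds _ _ (f1 x) (f1 xn).
have /andP[? ?] := dotv_unit_bounds _ _ (f1 x) (f1 xp).
by apply/andP; split; rewrite /margin; lra.
Qed.

Lemma measurable3_margin {f} : is_encoder f -> measurable3 (margin f).
Proof.
move=> [mf _].
have mdot (k1 k2 : (X * X) * X -> X) :
    measurable_fun [set: (X * X) * X] k1 -> measurable_fun [set: (X * X) * X] k2 ->
    measurable_fun [set: (X * X) * X] (fun p => dotv (f (k1 p)) (f (k2 p))).
  move=> mk1 mk2; apply: measurable_sum => i.
  by apply: measurable_funM; exact: measurableT_comp (mf i) _.
apply: measurable_funB; apply: mdot => //;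
  by [exact: measurableT_comp measurable_fst measurable_fst|
      exact: measurableT_comp measurable_snd measurable_fst|exact: measurable_snd].
Qed.

Lemma measurable3_con_integrand {f} : is_encoder f -> measurable3 (con_integrand f).
Proof.
by move=> ef; exact: measurableT_comp measurable_softplus (measurable3_margin ef).
Qed.

Lemma measurable3_dis_integrand {g h} : is_encoder g -> is_encoder h ->
  measurable3 (dis_integrand g h).
Proof.
move=> eg eh; apply: measurable_funB; first exact: measurable3_con_integrand.
apply: measurable_funM; last exact: measurable3_margin.
exact: measurableT_comp measurable_sigmoid (measurable3_margin eh).
Qed.

Lemma dis_integrand_ge0 g h x xp xn : 0 <= dis_integrand g h x xp xn.
Proof. by rewrite subr_ge0 sigmoid_mul_le_softplus. Qed.

Lemma L_conE f : L_con mu D f = task_expect mu D (con_integrand f).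
Proof.
rewrite /L_con; congr task_expect; apply/funext => x; apply/funext => xp.
by apply/funext => xn; rewrite /logistic dotv_subr opprB.
Qed.

Lemma L_disE g h : L_dis mu D g h = task_expect mu D (dis_integrand g h).
Proof.
rewrite /L_dis; congr task_expect; apply/funext => x; apply/funext => xp.
by apply/funext => xn; rewrite softmax_cross_entropy.
Qed.

End encoder_losses.

Theorem lemma1 (R : realType) (dX : measure_display) (X : measurableType dX)
  (n : nat) (C : countType) (mu : C -> R) (D : C -> probability X R)
  (g h : X -> 'rV[R]_n) :
  (0 < n)%N -> is_pmf mu -> is_encoder g -> is_encoder h ->
  (L_con mu D g <= alpha_c%:E * L_con mu D h + L_dis mu D g h + beta_c%:E)%E /\
  (alpha_c%:E * L_con mu D h + L_dis mu D g h + beta'_c%:E <= L_con mu D g)%E.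
Proof.
move=> _ mu_pmf eg eh; rewrite L_disE !L_conE.
have mFg := measurable3_con_integrand eg; have mFh := measurable3_con_integrand eh.
have mFd := measurable3_dis_integrand eg eh.
have Fg0 x xp xn : 0 <= con_integrand g x xp xn := softplus_ge0 _.
have Fh0 x xp xn : 0 <= con_integrand h x xp xn := softplus_ge0 _.
have Fd0 := dis_integrand_ge0 g h.
have al0 := ltW (@alpha_gt0 R).
have upper x xp xn : 0 * dis_integrand g h x xp xn + con_integrand g x xp xn - beta_c <=
    alpha_c * con_integrand h x xp xn + dis_integrand g h x xp xn.
  have /andP[_ le_g] := margin_bounds x xp xn eg.
  by have := sigmoid_mul_le (margin h x xp xn) _ le_g; rewrite /dis_integrand /con_integrand; lra.
have lower x xp xn : alpha_c * con_integrand h x xp xn + dis_integrand g h x xp xn +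
    beta'_c <= 0 * dis_integrand g h x xp xn + con_integrand g x xp xn.
  have /andP[ge_g _] := margin_bounds x xp xn eg.
  have /andP[_ le_h] := margin_bounds x xp xn eh.
  by have := sigmoid_mul_ge _ _ le_h ge_g; rewrite /dis_integrand /con_integrand; lra.
split.
- have := le_task_expect_affine D mu_pmf (lexx (0 : R)) al0 mFd mFg mFh mFd
    Fd0 Fg0 Fh0 Fd0 upper.
  by rewrite mul0e add0e EFinN leeBlDr.
- have := le_task_expect_affine D mu_pmf al0 (lexx (0 : R)) mFh mFd mFd mFg
    Fh0 Fd0 Fd0 Fg0 lower.
  by rewrite mul0e add0e.
Qed.
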